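(* Let $p,q$ be positive integers with $p+q$ odd. For all $n\ge3$ and all $g\in\mathcal{J}^{p,q}_n$, $$\psi_n(g)\equiv\frac{\psi_{n-1}(g_L)+\psi_{n-1}(g_R)}{p+q}\pmod{2^{\lfloor (n-1)/2\rfloor}}.$$
   Context: Let $p,q$ be positive integers with $p+q$ odd. $\mathbb{Z}_{2^k}$ denotes the integers modulo $2^k$ ($\mathbb{Z}_1$ trivial); as $p+q$ is odd, division by $p+q$ and $(p+q)^2$ is well defined in $\mathbb{Z}_{2^k}$. For $m\ge1$, $D_{2m}$ is the dihedral group of order $2m$, realized as pairs $(f,x)$, $f\in\mathbb{Z}_2$, $x\in\mathbb{Z}_m$, with product $(f_1,x_1)(f_2,x_2)=(f_1+f_2,x_1+(-1)^{f_1}x_2)$. Define $\Phi:D_{2m}\to D_{2m}$, $\Phi((f,x))=(f,\delta(f=1)(p+q)(p-q)-x)$, where $\delta(f=1)$ is $1$ if $f=1$ and $0$ otherwise. $\mathrm{Aut}(T_1)$ is trivial; for $k\ge1$, $\mathrm{Aut}(T_{k+1})$ is the set of triples $g=(g_f,g_L,g_R)$, $g_f\in\mathbb{Z}_2$, $g_L,g_R\in\mathrm{Aut}(T_k)$, with product $(f,A,B)(g,C,D)=(f+g,AC,BD)$ if $f=0$ and $(f+g,AD,BC)$ if $f=1$; subscripts chain ($g_{LR}=(g_L)_R$, $g_{Lf}=(g_L)_f$). Recursively: $\mathcal{J}_1=\mathrm{Aut}(T_2)$, $\psi_1=0$, $\Delta_1(g)=(g_f,0)$; $\mathcal{J}_2=\{g\in\mathrm{Aut}(T_3):g_L=g_R\}$,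 $\psi_2(g)=\delta(g_{Lf}=1)\in\mathbb{Z}_2$, $\Delta_2(g)=(g_f,\psi_2(g))$; for $n\ge3$, $\mathcal{J}_n=\{g\in\mathrm{Aut}(T_{n+1}):g_L,g_R\in\mathcal{J}_{n-1},\ \Delta_{n-1}(g_L)=\Phi(\Delta_{n-1}(g_R))\}$, with $\psi_n:\mathcal{J}_n\to\mathbb{Z}_{2^{\lfloor n/2\rfloor}}$ given by $\psi_n(g)=(\psi_{n-1}(g_L)+\psi_{n-1}(g_R))/(p+q)$ for odd $n$ and $\psi_n(g)=\big(2(\psi_{n-2}(g_{LL})+\psi_{n-2}(g_{RL}))-\delta(g_{Lf}=1)(p+q)(p-q)\big)/(p+q)^2$ for even $n$ (with $2\psi_{n-2}(\cdot)$ read in $\mathbb{Z}_{2^{n/2}}$), and $\Delta_n:\mathcal{J}_n\to D_{2^{\lfloor n/2\rfloor+1}}$ given by $\Delta_n(g)=(g_f,\psi_{n-1}(g_L)-\psi_{n-1}(g_R))$ for odd $n$ and $\Delta_n(g)=(g_f,(p+q)\psi_n(g)-2\psi_{n-1}(g_R))$ for even $n$. In the claim, $\psi_n(g)\in\mathbb{Z}_{2^{\lfloor n/2\rfloor}}$ is reduced modulo $2^{\lfloor(n-1)/2\rfloor}$. *)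

From mathcomp Require Import all_boot all_order all_algebra.
Set Implicit Arguments. Unset Strict Implicit. Unset Printing Implicit Defensive.
Import Order.TTheory GRing.Theory Num.Theory.
Local Open Scope ring_scope.

(* aut k = Aut(T_{k+1}):  Aut(T_1) trivial, Aut(T_{k+1}) = Z2 x Aut(T_k) x Aut(T_k),
   a triple (g_f, g_L, g_R). (Group product not needed for the statement.) *)
Fixpoint aut (k : nat) : Type :=
  match k with
  | 0 => unit
  | k'.+1 => (bool * aut k' * aut k')%type
  end.

Definition aut_f (k : nat) (g : aut k.+1) : bool := g.1.1.
Definition aut_L (k : nat) (g : aut k.+1) : aut k := g.1.2.
Definition aut_R (k : nat) (g : aut k.+1) : aut k := g.2.

(* Elements of Z_{2^k} are represented by their canonical representative in
   [0, 2^k) as integers. *)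
Definition md (k : nat) (x : int) : int := (x %% (2 ^ k)%N%:Z)%Z.

(* Division x / a in Z_{2^k}: the (unique, for odd a) residue y with a*y = x. *)
Definition zdiv (k : nat) (a x : int) : int :=
  match [pick y : 'I_(2 ^ k) | md k (a * (nat_of_ord y)%:Z - x) == 0] with
  | Some y => (nat_of_ord y)%:Z
  | None => 0
  end.

(* Data attached to g in Aut(T_{n+1}) at level n:
   ipsi = psi_n(g) in Z_{2^{n/2}}, idlt = Delta_n(g) in D_{2^{n/2+1}}
   (pair (f, x) with x in Z_{2^{n/2}}), iJ = (g \in J_n). *)
Record info := Info { ipsi : int; idlt : bool * int; iJ : Prop }.

Section Rec.
Variables p q : nat.
Definition spq : int := (p + q)%N%:Z.
Definition epq : int := spq * (p%:Z - q%:Z).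

Definition Phi (k : nat) (d : bool * int) : bool * int :=
  (d.1, md k ((if d.1 then epq else 0) - d.2)).

Fixpoint Jdata (n : nat) : aut n -> info :=
  match n return aut n -> info with
  | 0 => fun _ => Info 0 (false, 0) False
  | m.+1 => fun g0 =>
    (match m as m0 return aut m0.+1 -> (aut m0 -> info) -> info with
     | 0 => fun g _ => (* n = 1 *) Info 0 (g.1.1, 0) True
     | l.+1 => fun g Fm =>
        let gf := g.1.1 in
        let gL := g.1.2 in
        let gR := g.2 in
        match l as l0 return aut l0.+1 -> aut l0.+1 -> (aut l0.+1 -> info) -> (aut l0 -> info) -> info with
        | 0 => fun gL gR _ _ => (* n = 2 *)
            let ps := if gL.1.1 then 1 else 0 in
            Info ps (gf, ps) (gL = gR)
        | j.+1 => fun gL gR Fm' Fl =>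
            let nn := j.+3 in
            let k := nn./2 in
            let iL := Fm' gL in
            let iR := Fm' gR in
            let iLL := Fl gL.1.2 in
            let iRL := Fl gR.1.2 in
            let ps :=
              if odd nn then zdiv k spq (ipsi iL + ipsi iR)
              else zdiv k (spq * spq)
                     (2 * (ipsi iLL + ipsi iRL) - (if gL.1.1 then epq else 0)) in
            let dl :=
              if odd nn then (gf, md k (ipsi iL - ipsi iR))
              else (gf, md k (spq * ps - 2 * ipsi iR)) in
            Info ps dl
              [/\ iJ iL, iJ iR & idlt iL = Phi (j.+2)./2 (idlt iR)]
        end gL gR Fm (@Jdata l)
     end) g0 (@Jdata m)
  end.
End Rec.

Definition J (p q n : nat) (g : aut n) : Prop := iJ (Jdata p q g).
Definition psi (p q n : nat) (g : aut n) : int := ipsi (Jdata p q g).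
Definition Delta (p q n : nat) (g : aut n) : bool * int := idlt (Jdata p q g).

(* For odd n, floor(n/2) = floor((n-1)/2) and the claim is the defining
   equation of psi_n.  For even n put s = p + q, let a, b, c, d be
   the values of psi_(n-2) at g_LL, g_LR, g_RL, g_RR, and let e = s (p - q) if
   g_L flips and e = 0 otherwise.  Since s is odd it is a unit modulo every
   power of 2, so it suffices to compare s^2 psi_n = 2 (a + c) - e with
   s (psi_(n-1)(g_L) + psi_(n-1)(g_R)) = a + b + c + d.  Their difference is
   (a - b) - (e - (c - d)), which vanishes modulo 2^((n-1)/2) precisely because
   g in J_n forces Delta_(n-1)(g_L) = Phi(Delta_(n-1)(g_R)). *)

From mathcomp Require Import all_boot all_order all_algebra.
From mathcomp Require Import ring.
Set Implicit Arguments. Unset Strict Implicit.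
Import Order.TTheory GRing.Theory Num.Theory.
Local Open Scope ring_scope.

Local Notation pow2 k := ((2 ^ k)%N%:Z).

Lemma pow2_gt0 k : 0 < pow2 k.
Proof. by rewrite ltz_nat expn_gt0. Qed.

Lemma pow2_dvd k l : (k <= l)%N -> (pow2 k %| pow2 l)%Z.
Proof. by move=> le_kl; rewrite dvdzE !absz_nat dvdn_exp2l. Qed.

Lemma coprimez_pow2 (a : int) k : odd `|a|%N -> coprimez a (pow2 k).
Proof.
move=> odd_a; rewrite coprimezE absz_nat.
by case: k => [|k]; rewrite ?coprimen1 // coprimeXr // coprimen2.
Qed.

Lemma md_eq k x y : md k x = md k y <-> (pow2 k %| x - y)%Z.
Proof. by rewrite /md -eqz_mod_dvd; split => [->|/eqP]. Qed.

Lemma dvdz_md k x : (pow2 k %| md k x - x)%Z.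
Proof. by rewrite -md_eq /md modz_mod. Qed.

Lemma md_zdiv k a x : md k (zdiv k a x) = zdiv k a x.
Proof.
rewrite /md /zdiv; case: pickP => [y _|_]; last exact: mod0z.
by rewrite modz_small // lez_nat ltz_nat ltn_ord.
Qed.

Lemma dvdz_mul_zdiv k a x :
  coprimez a (pow2 k) -> (pow2 k %| a * zdiv k a x - x)%Z.
Proof.
(* Bezout makes the residue of u * x a solution, so the search never fails. *)
move=> /eqP co_a; rewrite /zdiv; case: pickP => [y /eqP/dvdz_mod0P // | no_sol].
have [u [v bezout]] := Bezoutz a (pow2 k); rewrite co_a in bezout.
have y_ge0 : 0 <= md k (u * x) by rewrite modz_ge0 // gt_eqF ?pow2_gt0.
have y_lt : (`|md k (u * x)| < 2 ^ k)%N.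
  by rewrite -ltz_nat gez0_abs // ltz_pmod ?pow2_gt0.
case/negP: (no_sol (Ordinal y_lt)); apply/eqP/dvdz_mod0P => /=.
rewrite gez0_abs //.
have -> : a * md k (u * x) - x =
    a * (md k (u * x) - u * x) - v * pow2 k * x + (u * a + v * pow2 k - 1) * x.
  by ring.
rewrite bezout subrr mul0r addr0.
by apply: rpredB; [apply/dvdz_mull/dvdz_md | apply/dvdz_mulr/dvdz_mull/dvdzz].
Qed.

Lemma zdiv_unique k a x y :
  coprimez a (pow2 k) -> (pow2 k %| a * y - x)%Z -> md k y = zdiv k a x.
Proof.
move=> co_a sol_y; rewrite -[RHS]md_zdiv; apply/md_eq.
rewrite -(Gauss_dvdzr _ (_ : coprimez (pow2 k) a)); last by rewrite coprimez_sym.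
have -> : a * (y - zdiv k a x) = (a * y - x) - (a * zdiv k a x - x) by ring.
by rewrite rpredB // dvdz_mul_zdiv.
Qed.

Lemma md_subr_md k x y : md k (x - md k y) = md k (x - y).
Proof.
apply/md_eq; have -> : x - md k y - (x - y) = - (md k y - y) by ring.
by rewrite rpredN dvdz_md.
Qed.

Lemma md_zdiv_sq_sum k (s a b c d e : int) :
  odd `|s|%N -> md k (a - b) = md k (e - (c - d)) ->
  md k (zdiv k.+1 (s * s) (2 * (a + c) - e)) =
  zdiv k s (zdiv k s (a + b) + zdiv k s (c + d)).
Proof.
move=> odd_s /md_eq diff_ab; have co_s l := @coprimez_pow2 s l odd_s.
set P := zdiv _ _ _; set PL := zdiv k s (a + b); set PR := zdiv k s (c + d).
apply: zdiv_unique => //.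
rewrite -(Gauss_dvdzr _ (_ : coprimez (pow2 k) s)); last by rewrite coprimez_sym.
have sqP : (pow2 k %| s * s * P - (2 * (a + c) - e))%Z.
  apply: dvdz_trans (pow2_dvd (leqnSn k)) _; apply: dvdz_mul_zdiv.
  by rewrite coprimezMl !co_s.
have -> : s * (s * P - (PL + PR)) = (s * s * P - (2 * (a + c) - e))
    - (s * PL - (a + b)) - (s * PR - (c + d)) + (a - b - (e - (c - d))) by ring.
have [divL divR] : (pow2 k %| s * PL - (a + b))%Z /\ (pow2 k %| s * PR - (c + d))%Z.
  by split; apply: dvdz_mul_zdiv.
by apply/rpredD/diff_ab; apply/rpredB/divR; apply/rpredB/divL.
Qed.

Section Recursion.
Variables p q : nat.

Lemma J_rec j (g : aut j.+3) :
  J p q g = [/\ J p q (aut_L g), J p q (aut_R g)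
              & Delta p q (aut_L g) = Phi p q (j.+2)./2 (Delta p q (aut_R g))].
Proof. by case: g => [[f gL] gR]. Qed.

Lemma psi_odd j (g : aut j.+3) : odd j.+3 ->
  psi p q g = zdiv (j.+3)./2 (spq p q) (psi p q (aut_L g) + psi p q (aut_R g)).
Proof. by case: g => [[f gL] gR]; rewrite /psi /= => ->. Qed.

Lemma psi_even j (g : aut j.+3) : ~~ odd j.+3 ->
  psi p q g = zdiv (j.+3)./2 (spq p q * spq p q)
    (2 * (psi p q (aut_L (aut_L g)) + psi p q (aut_L (aut_R g)))
     - (if aut_f (aut_L g) then epq p q else 0)).
Proof. by case: g => [[f gL] gR]; rewrite /psi /= => /negbTE ->. Qed.

Lemma Delta_odd j (g : aut j.+3) : odd j.+3 ->
  Delta p q g = (aut_f g, md (j.+3)./2 (psi p q (aut_L g) - psi p q (aut_R g))).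
Proof. by case: g => [[f gL] gR]; rewrite /Delta /psi /= => ->. Qed.

End Recursion.

Theorem lemma2 (p q : nat) (hp : (0 < p)%N) (hq : (0 < q)%N) (hodd : odd (p + q))
  (m : nat) (hm : (2 <= m)%N) (g : aut m.+1) :
  J p q g ->
  md m./2 (psi p q g) =
  zdiv m./2 (spq p q) (psi p q (aut_L g) + psi p q (aut_R g)).
Proof.
case: m hm g => [|[|j]] // _ g; rewrite J_rec => -[_ _ Delta_LR].
have [odd_n | even_n] := boolP (odd j.+3).
  have half_n : (j.+3)./2 = (j.+2)./2.
    by rewrite -[LHS]/(uphalf j.+2) uphalf_half; move: odd_n => /= /negbTE ->.
  by rewrite psi_odd // half_n md_zdiv.
case: j even_n g Delta_LR => [|i] // even_n g.
have odd_m : odd i.+3 by move: even_n => /=; rewrite negbK.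
have half_n : (i.+4)./2 = ((i.+3)./2).+1.
  by rewrite -[LHS]/(uphalf i.+3) uphalf_half odd_m.
rewrite psi_even // half_n !psi_odd // !Delta_odd // => -[<-].
rewrite md_subr_md => diff_LR.
by apply: md_zdiv_sq_sum; rewrite // absz_nat.
Qed.
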